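(* Consider the opinion--action model described in the context with $\phi\in(0,1)$ and arbitrary initial values, and its augmented state matrices $P(t)$. Then for every $t\ge1$, the digraph $\mathcal{G}(P(t))$ has one of the following structures: (i) it is strongly connected; (ii) its condensation digraph consists of one sink and one or more singleton sources.
   Context: Fix an integer $n\ge 1$, agent set $\mathcal{V}=\{1,\dots,n\}$, a confidence threshold $\epsilon\in[0,1]$ and a decision weight $\phi\in[0,1]$. Each agent $i$ has opinion $x_i(t)\in[0,1]$ and action $y_i(t)\in[0,1]$. For $t\in\mathbb{Z}_{\ge0}$ the model evolves by: $\mathcal{N}_i(t)=\{j\in\mathcal{V}\mid j\neq i,\ |x_i(t)-y_j(t)|\le\epsilon\}$; $x_i(t+1)=\frac{x_i(t)+\sum_{j\in\mathcal{N}_i(t)}y_j(t)}{|\mathcal{N}_i(t)|+1}$; $y_i(t+1)=\phi\,x_i(t+1)+(1-\phi)\,y_{\mathrm{avg}}(t)$ with $y_{\mathrm{avg}}(t)=\frac1n\sum_{k=1}^n y_k(t)$. For $t\ge1$, $P(t)=\begin{bmatrix}P_{11}(t)&P_{12}(t)\\ P_{21}&P_{22}\end{bmatrix}\in\mathbb{R}^{2n\times2n}$ with $n\times n$ blocks: $[P_{11}(t)]_{ij}=\frac{1}{|\mathcal{N}_i(t)|+1}$ if $j=i$, $\frac{\phi}{|\mathcal{N}_i(t)|+1}$ if $j\in\mathcal{N}_i(t)$, and $0$ otherwise; $[P_{12}(t)]_{ij}=\frac{(1-\phi)|\mathcal{N}_i(t)|}{(|\mathcal{N}_i(t)|+1)n}$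 for all $i,j$; $P_{21}=\phi I_n$; $P_{22}=\frac{1-\phi}{n}\mathbf{1}_n\mathbf{1}_n^\top$. (With $z_i(t)=x_i(t)$, $z_{n+i}(t)=y_i(t-1)$ one has $\mathbf{z}(t+1)=P(t)\mathbf{z}(t)$.) For a nonnegative matrix $A\in\mathbb{R}^{m\times m}$, $\mathcal{G}(A)$ is the digraph on $\{1,\dots,m\}$ with a directed edge $(j,i)$ (from $j$ to $i$) iff $a_{ij}>0$. A strongly connected component (SCC) is a maximal strongly connected subgraph; the condensation digraph has the SCCs as nodes and an edge from SCC$_a$ to SCC$_b$ ($a\neq b$) iff some node of SCC$_a$ has an edge to some node of SCC$_b$. A source is a node with no incoming edges, a sink a node with no outgoing edges; a singleton SCC has exactly one node. *)

From HB Require Import structures.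
From mathcomp Require Import all_boot all_order all_algebra.
Set Implicit Arguments. Unset Strict Implicit. Unset Printing Implicit Defensive.
Import Order.TTheory GRing.Theory Num.Theory.
Local Open Scope ring_scope.

Definition nbr (R : realFieldType) (n : nat) (eps : R) (x y : 'I_n -> R)
    (i : 'I_n) : {set 'I_n} :=
  [set j | (j != i) && (`|x i - y j| <= eps)].

Definition oa_step (R : realFieldType) (n : nat) (eps phi : R)
    (xy : ('I_n -> R) * ('I_n -> R)) : ('I_n -> R) * ('I_n -> R) :=
  let x := xy.1 in let y := xy.2 in
  let N := nbr eps x y in
  let x' := fun i => (x i + \sum_(j in N i) y j) / (#|N i|%:R + 1) in
  let yavg := (\sum_(k < n) y k) / n%:R in
  (x', fun i => phi * x' i + (1 - phi) * yavg).

Fixpoint oa_traj (R : realFieldType) (n : nat) (eps phi : R)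
    (x0 y0 : 'I_n -> R) (t : nat) : ('I_n -> R) * ('I_n -> R) :=
  match t with
  | 0 => (x0, y0)
  | t'.+1 => oa_step eps phi (oa_traj eps phi x0 y0 t')
  end.

Definition Pmat (R : realFieldType) (n : nat) (phi : R)
    (N : 'I_n -> {set 'I_n}) : 'M[R]_(n + n) :=
  let P11 := \matrix_(i < n, j < n)
      (if j == i then 1 / (#|N i|%:R + 1)
       else if j \in N i then phi / (#|N i|%:R + 1) else 0) in
  let P12 := \matrix_(i < n, j < n)
      ((1 - phi) * #|N i|%:R / ((#|N i|%:R + 1) * n%:R)) in
  let P21 := (phi%:M : 'M[R]_n) in
  let P22 := (const_mx ((1 - phi) / n%:R) : 'M[R]_n) in
  block_mx P11 P12 P21 P22.

Definition graph_rel (R : realFieldType) (m : nat) (A : 'M[R]_m) : rel 'I_m :=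
  fun j i => 0 < A i j.

Definition scc (T : finType) (e : rel T) (u : T) : {set T} :=
  [set v | connect e u v && connect e v u].

Definition sccs (T : finType) (e : rel T) : {set {set T}} :=
  [set scc e u | u in T].

Definition cond_edge (T : finType) (e : rel T) (A B : {set T}) : bool :=
  (A != B) && [exists u in A, exists v in B, e u v].

Definition cond_source (T : finType) (e : rel T) (A : {set T}) : Prop :=
  forall B, B \in sccs e -> ~~ cond_edge e B A.

Definition cond_sink (T : finType) (e : rel T) (A : {set T}) : Prop :=
  forall B, B \in sccs e -> ~~ cond_edge e A B.

Definition strongly_connected (T : finType) (e : rel T) : Prop :=
  forall u v : T, connect e u v.

Definition one_sink_singleton_sources (T : finType) (e : rel T) : Prop :=
  exists2 S, S \in sccs e &
    [/\ cond_sink e S,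
        (forall A, A \in sccs e -> cond_sink e A -> A = S),
        (forall A, A \in sccs e -> A != S -> #|A| = 1%N /\ cond_source e A)
      & exists2 A, A \in sccs e & A != S].

From HB Require Import structures.
From mathcomp Require Import all_boot all_order all_algebra.
Import Order.TTheory GRing.Theory Num.Theory.
Local Open Scope ring_scope.

(* Only the sign pattern of P(t) matters, and the conclusion holds for any
   neighbour sets N.  The block P22 is positive and P21 = phi I, so every node
   reaches every y-node and the y-nodes reach each other; since P12 has
   positive rows exactly where N_i is nonempty, the x-nodes with N_i nonempty
   are reached from the y-nodes and join their class.  An x-node with N_i
   empty receives no edge but its self-loop: it is a singleton source, and the
   class of the y-nodes is the unique sink. *)

Section SourcesAndOneSink.

Variables (T : finType) (e : rel T) (src : pred T).

Hypothesis src_in_edge : forall {u v}, src v -> e u v -> u = v.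
Hypothesis connect_nonsrc : forall u v, ~~ src v -> connect e u v.
Hypothesis src_out_edge : forall {u}, src u -> exists2 v, ~~ src v & e u v.

Lemma connect_src {u v} : connect e u v -> src v -> u = v.
Proof.
move=> /connectP[p]; elim: p u => [|z p IHp] u /=; first by move=> _ ->.
case/andP=> euz pz lastv srcv.
by move: euz; rewrite (IHp z pz lastv srcv); apply: src_in_edge.
Qed.

Let S := [set v | ~~ src v].

Lemma scc_src u : src u -> scc e u = [set u].
Proof.
move=> srcu; apply/setP=> v; rewrite !inE.
apply/andP/eqP=> [[_ vu] | ->]; first exact: connect_src vu srcu.
by split; apply: connect0.
Qed.

Lemma scc_nonsrc u : ~~ src u -> scc e u = S.
Proof.
move=> nsrcu; apply/setP=> v; rewrite !inE.
case srcv: (src v) => /=.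
  by apply/negP=> /andP[uv _]; rewrite (connect_src uv srcv) srcv in nsrcu.
by rewrite !connect_nonsrc ?srcv.
Qed.

Lemma sccsP {B} :
  B \in sccs e -> B = S \/ exists2 u, src u & B = [set u].
Proof.
case/imsetP=> u _ ->; case srcu: (src u).
  by right; exists u; rewrite ?scc_src.
by left; rewrite scc_nonsrc ?srcu.
Qed.

Lemma src_notin_S {w} : src w -> w \notin S.
Proof. by rewrite inE negbK. Qed.

Lemma set1_src_neq_S w : src w -> [set w] != S.
Proof.
by move=> srcw; apply/eqP=> wS; move: (src_notin_S srcw); rewrite -wS set11.
Qed.

Lemma no_cond_edge_to_src {A w} :
  A \in sccs e -> src w -> ~~ cond_edge e A [set w].
Proof.
move=> Ascc srcw; apply/andP=> -[neqAw /existsP[u /andP[uA /existsP[v]]]].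
rewrite inE => /andP[/eqP-> /(src_in_edge srcw) uw]; rewrite {u}uw in uA.
case: (sccsP Ascc) => [AS | [w' _ Aw']].
  by rewrite AS (negbTE (src_notin_S srcw)) in uA.
by rewrite Aw' inE in uA neqAw; rewrite (eqP uA) eqxx in neqAw.
Qed.

Lemma no_cond_edge_from_S B : B \in sccs e -> ~~ cond_edge e S B.
Proof.
case/sccsP=> [-> | [w srcw ->]]; first by rewrite /cond_edge eqxx.
apply/andP=> -[_ /existsP[u /andP[uS /existsP[v]]]].
rewrite inE => /andP[/eqP-> /(src_in_edge srcw) uw].
by rewrite uw (negbTE (src_notin_S srcw)) in uS.
Qed.

Lemma cond_edge_src_S w : src w -> cond_edge e [set w] S.
Proof.
move=> srcw; rewrite /cond_edge set1_src_neq_S //=.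
have [v nsrcv ewv] := src_out_edge srcw.
apply/existsP; exists w; rewrite set11 /=.
by apply/existsP; exists v; rewrite inE nsrcv.
Qed.

Lemma strongly_connected_or_src_sink :
  strongly_connected e \/ one_sink_singleton_sources e.
Proof.
case: (pickP src) => [w srcw | nosrc]; last first.
  by left=> u v; rewrite connect_nonsrc ?nosrc.
have [v nsrcv _] := src_out_edge srcw.
have Sscc : S \in sccs e by apply/imsetP; exists v; rewrite ?scc_nonsrc.
have wscc : [set w] \in sccs e by apply/imsetP; exists w; rewrite ?scc_src.
right; exists S => //; split.
- exact: no_cond_edge_from_S.
- move=> A /sccsP[// | [u srcu ->]] /(_ S Sscc).
  by rewrite cond_edge_src_S.
- move=> A /sccsP[-> | [u srcu ->]]; first by rewrite eqxx.
  by split=> [|B Bscc]; rewrite ?cards1 ?no_cond_edge_to_src.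
- by exists [set w]; rewrite ?set1_src_neq_S.
Qed.

End SourcesAndOneSink.

Section PmatGraph.

Variables (R : realFieldType) (n : nat) (phi : R) (N : 'I_n -> {set 'I_n}).
Hypotheses (phi_gt0 : 0 < phi) (phi_lt1 : phi < 1).

Local Notation e := (graph_rel (Pmat phi N)).

Definition isolated_opinion : pred 'I_(n + n) :=
  fun u => if split u is inl i then N i == set0 else false.

Let denom_gt0 i : 0 < (#|N i|%:R + 1 : R).
Proof. by rewrite ltr_wpDl. Qed.

Let n_gt0 (i : 'I_n) : (0 < n)%N.
Proof. exact: leq_ltn_trans (ltn_ord i). Qed.

Lemma Pmat_edge_xx i j :
  e (lshift n j) (lshift n i) = (j == i) || (j \in N i).
Proof.
rewrite /graph_rel /Pmat block_mxEul mxE.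
by case: (j == i); case: (j \in N i); rewrite ?divr_gt0 ?denom_gt0 ?ltxx.
Qed.

Lemma Pmat_edge_yx i j : e (rshift n j) (lshift n i) = (N i != set0).
Proof.
rewrite /graph_rel /Pmat block_mxEur mxE -card_gt0.
have [-> | Ni_gt0] := posnP #|N i|; first by rewrite mulr0 mul0r ltxx.
by rewrite divr_gt0 ?mulr_gt0 ?denom_gt0 ?subr_gt0 ?ltr0n ?Ni_gt0 ?(n_gt0 i).
Qed.

Lemma Pmat_edge_xy i j : e (lshift n j) (rshift n i) = (j == i).
Proof.
rewrite /graph_rel /Pmat block_mxEdl mxE eq_sym.
by case: (j == i); rewrite ?mulr1n ?mulr0n ?ltxx.
Qed.

Lemma Pmat_edge_yy i j : e (rshift n j) (rshift n i).
Proof.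
rewrite /graph_rel /Pmat block_mxEdr mxE.
by rewrite divr_gt0 ?subr_gt0 ?ltr0n ?(n_gt0 i).
Qed.

Lemma isolated_opinion_lshift i : isolated_opinion (lshift n i) = (N i == set0).
Proof. by rewrite /isolated_opinion (unsplitK (inl _ i)). Qed.

Lemma isolated_opinion_rshift i : isolated_opinion (rshift n i) = false.
Proof. by rewrite /isolated_opinion (unsplitK (inr _ i)). Qed.

Lemma isolated_opinion_in_edge u v :
  isolated_opinion v -> e u v -> u = v.
Proof.
case: (split_ordP v) => i ->; rewrite ?isolated_opinion_rshift //.
rewrite isolated_opinion_lshift => /eqP Ni0.
case: (split_ordP u) => j ->; last by rewrite Pmat_edge_yx Ni0 eqxx.
by rewrite Pmat_edge_xx Ni0 inE orbF => /eqP->.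
Qed.

Lemma Pmat_edge_to_y u : exists k, e u (rshift n k).
Proof.
by case: (split_ordP u) => k ->; exists k; rewrite ?Pmat_edge_xy ?Pmat_edge_yy.
Qed.

Lemma Pmat_edge_from_y k v : ~~ isolated_opinion v -> e (rshift n k) v.
Proof.
case: (split_ordP v) => i ->; last by rewrite Pmat_edge_yy.
by rewrite isolated_opinion_lshift Pmat_edge_yx.
Qed.

Lemma connect_Pmat_nonisolated u v : ~~ isolated_opinion v -> connect e u v.
Proof.
have [k euk] := Pmat_edge_to_y u.
by move/(Pmat_edge_from_y k)/connect1; apply/connect_trans/connect1.
Qed.

Lemma isolated_opinion_out_edge u :
  isolated_opinion u -> exists2 v, ~~ isolated_opinion v & e u v.
Proof.
case: (split_ordP u) => i ->; rewrite ?isolated_opinion_rshift // => _.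
by exists (rshift n i); rewrite ?isolated_opinion_rshift ?Pmat_edge_xy.
Qed.

Lemma Pmat_graph_structure :
  strongly_connected e \/ one_sink_singleton_sources e.
Proof.
exact: strongly_connected_or_src_sink isolated_opinion_in_edge
  connect_Pmat_nonisolated isolated_opinion_out_edge.
Qed.

End PmatGraph.

Theorem theorem2 (R : realFieldType) (n : nat) (eps phi : R)
    (x0 y0 : 'I_n -> R) :
  (1 <= n)%N ->
  0 <= eps <= 1 ->
  0 < phi < 1 ->
  (forall i, 0 <= x0 i <= 1) ->
  (forall i, 0 <= y0 i <= 1) ->
  forall t : nat, (1 <= t)%N ->
    let xy := oa_traj eps phi x0 y0 t in
    let e := graph_rel (Pmat phi (nbr eps xy.1 xy.2)) in
    strongly_connected e \/ one_sink_singleton_sources e.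
Proof.
move=> _ _ /andP[phi_gt0 phi_lt1] _ _ t _ xy e.
exact: Pmat_graph_structure.
Qed.
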